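(* Let $(X,d_X)$ and $(Y,d_Y)$ be geodesic spaces with monotone moduli of weak uniform convexity $\eta_X$ and $\eta_Y$, respectively. Let $\theta\in X$, $\tau\in Y$ and let $Z=X\sqcup_\theta Y$ be the gluing of $X$ and $Y$ obtained by identifying $\theta$ and $\tau$. Then $Z$ is weakly uniformly convex, with modulus of weak uniform convexity \[\eta(a,r,\varepsilon)=\begin{cases}\min\{\eta_X(a,r,\varepsilon),\ \eta_Y(\tau,r,\varepsilon)\varepsilon/2,\ \varepsilon/4,\ \eta_X(a,r,\varepsilon/4)\}, & a\in X,\\ \min\{\eta_Y(a,r,\varepsilon),\ \eta_X(\theta,r,\varepsilon)\varepsilon/2,\ \varepsilon/4,\ \eta_Y(a,r,\varepsilon/4)\}, & a\in Y.\end{cases}\]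
   Context: For a geodesic space $W$ (metric space in which any two points are joined by a distance-preserving path from an interval, whose image is a geodesic segment), a modulus of weak uniform convexity is a map $\eta:W\times(0,\infty)\times(0,2]\to(0,1]$ such that for all $a\in W$, $r>0$, $\varepsilon\in(0,2]$, all $x,y\in W$ and every geodesic segment $[x,y]$ with midpoint $m(x,y)$: if $d(a,x)\le r$, $d(a,y)\le r$ and $d(x,y)\ge\varepsilon r$, then $d(a,m(x,y))\le(1-\eta(a,r,\varepsilon))r$. $W$ is weakly uniformly convex if it admits such a modulus. A modulus is monotone if it is nonincreasing in its second argument. The gluing $X\sqcup_\theta Y$ is the quotient of the disjoint union $X\sqcup Y$ by the identification $\theta\sim\tau$, with $X$ and $Y$ identified with their images, equipped with the metric $d(x,y)=d_X(x,y)$ if $x,y\in X$, $d(x,y)=d_Y(x,y)$ if $x,y\in Y$, and $d(x,y)=d_X(x,\theta)+d_Y(\tau,y)$ if $x\in X$, $y\in Y$. *)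

From Stdlib Require Import Reals Lra.
Open Scope R_scope.

Definition metric_space {T : Type} (d : T -> T -> R) : Prop :=
  (forall x y, 0 <= d x y) /\
  (forall x y, d x y = 0 <-> x = y) /\
  (forall x y, d x y = d y x) /\
  (forall x y z, d x z <= d x y + d y z).

(* Its image is
   a geodesic segment [x,y], whose midpoint is gam (d x y / 2). *)
Definition geodesic {T : Type} (d : T -> T -> R) (gam : R -> T) (x y : T) : Prop :=
  gam 0 = x /\ gam (d x y) = y /\
  (forall s t, 0 <= s <= d x y -> 0 <= t <= d x y ->
     d (gam s) (gam t) = Rabs (s - t)).

Definition geodesic_space {T : Type} (d : T -> T -> R) : Prop :=
  metric_space d /\ forall x y : T, exists gam : R -> T, geodesic d gam x y.

Definition modulus_wuc {T : Type} (d : T -> T -> R) (eta : T -> R -> R -> R) : Prop :=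
  (forall a r eps, 0 < r -> 0 < eps <= 2 -> 0 < eta a r eps <= 1) /\
  (forall a r eps x y gam, 0 < r -> 0 < eps <= 2 ->
     geodesic d gam x y ->
     d a x <= r -> d a y <= r -> eps * r <= d x y ->
     d a (gam (d x y / 2)) <= (1 - eta a r eps) * r).

Definition monotone_modulus {T : Type} (eta : T -> R -> R -> R) : Prop :=
  forall a r s eps, 0 < r -> r <= s -> 0 < eps <= 2 -> eta a s eps <= eta a r eps.

(* The gluing X ⊔_θ Y: the quotient of X + Y by inl θ ~ inr τ, modelled by
   its canonical set of representatives {z : X + Y | z <> inr τ}
   (the glued point is represented by inl θ). *)
Definition glue (X Y : Type) (tau : Y) : Type := {z : X + Y | z <> inr tau}.

Definition sum_dist {X Y : Type} (dX : X -> X -> R) (dY : Y -> Y -> R)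
  (theta : X) (tau : Y) (u v : X + Y) : R :=
  match u, v with
  | inl x, inl x' => dX x x'
  | inr y, inr y' => dY y y'
  | inl x, inr y => dX x theta + dY tau y
  | inr y, inl x => dX x theta + dY tau y
  end.

Definition glue_dist {X Y : Type} (dX : X -> X -> R) (dY : Y -> Y -> R)
  (theta : X) (tau : Y) (z w : glue X Y tau) : R :=
  sum_dist dX dY theta tau (proj1_sig z) (proj1_sig w).

(* The modulus of the statement; points of X (including the glued point)
   use the first formula, points of Y \ {τ} the second. *)
Definition glue_eta {X Y : Type} (etaX : X -> R -> R -> R) (etaY : Y -> R -> R -> R)
  (theta : X) (tau : Y) (a : glue X Y tau) (r eps : R) : R :=
  match proj1_sig a with
  | inl x => Rmin (Rmin (etaX x r eps) (etaY tau r eps * eps / 2))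
                  (Rmin (eps / 4) (etaX x r (eps / 4)))
  | inr y => Rmin (Rmin (etaY y r eps) (etaX theta r eps * eps / 2))
                  (Rmin (eps / 4) (etaY y r (eps / 4)))
  end.

From Stdlib Require Import Reals Lra Classical ClassicalEpsilon ProofIrrelevance.
Open Scope R_scope.

(* Geodesics of the glued space between two points of the same side stay on that side, so
   their midpoints are controlled by the modulus of that side; for two points of Y seen from
   a centre a in X the relevant ball is the one around tau of radius r - d(a, theta), and
   monotonicity of eta_Y brings its modulus back to radius r. A geodesic from X to Y passes
   through the glue point: if its midpoint lies in Y it is within r - eps r / 2 of the centre,
   and otherwise it lies on the X-part, where convexity of balls (a consequence of weak
   uniform convexity) and the modulus at eps / 4 apply. Centres in Y are handled by exchanging
   the roles of X and Y. *)

Section MetricGeodesics.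

Context {T : Type} (d : T -> T -> R) (Hd : metric_space d).

Lemma dist_ge0 x y : 0 <= d x y.
Proof. apply Hd. Qed.

Lemma dist_eq0 x y : d x y = 0 -> x = y.
Proof. apply Hd. Qed.

Lemma dist_refl x : d x x = 0.
Proof. apply Hd; reflexivity. Qed.

Lemma dist_sym x y : d x y = d y x.
Proof. apply Hd. Qed.

Lemma dist_triangle x y z : d x z <= d x y + d y z.
Proof. apply Hd. Qed.

Lemma dist_gt0 x y : x <> y -> 0 < d x y.
Proof.
  intros Hxy. destruct (Rle_lt_or_eq_dec _ _ (dist_ge0 x y)) as [|E]; [assumption|].
  exfalso; apply Hxy, dist_eq0; symmetry; exact E.
Qed.

Lemma geodesic_dist_ends g x y t :
  geodesic d g x y -> 0 <= t <= d x y -> d x (g t) = t /\ d (g t) y = d x y - t.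
Proof.
  intros [G0 [G1 G]] Ht. split.
  - rewrite <- G0 at 1. rewrite G by lra. rewrite Rabs_minus_sym, Rminus_0_r.
    apply Rabs_right; lra.
  - rewrite <- G1 at 1. rewrite G by lra. rewrite Rabs_minus_sym. apply Rabs_right; lra.
Qed.

Lemma geodesic_subsegment g x y s1 s2 :
  geodesic d g x y -> 0 <= s1 -> s1 <= s2 -> s2 <= d x y ->
  d (g s1) (g s2) = s2 - s1 /\ geodesic d (fun t => g (s1 + t)) (g s1) (g s2).
Proof.
  intros [G0 [G1 G]] H1 H12 H2.
  assert (E : d (g s1) (g s2) = s2 - s1).
  { rewrite G by lra. rewrite Rabs_minus_sym. apply Rabs_right; lra. }
  split; [exact E|]. split; [|split].
  - rewrite Rplus_0_r; reflexivity.
  - rewrite E. f_equal; ring.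
  - intros s t Hs Ht. rewrite E in Hs, Ht. rewrite G by lra. f_equal; ring.
Qed.

Lemma geodesic_rev g x y : geodesic d g x y -> geodesic d (fun t => g (d x y - t)) y x.
Proof.
  intros [G0 [G1 G]]. unfold geodesic. rewrite (dist_sym y x). split; [|split].
  - rewrite Rminus_0_r; exact G1.
  - rewrite Rminus_diag; exact G0.
  - intros s t Hs Ht. rewrite G by lra. rewrite Rabs_minus_sym. f_equal; ring.
Qed.

Lemma geodesic_concat g1 g2 x w y :
  d x y = d x w + d w y -> geodesic d g1 x w -> geodesic d g2 w y ->
  geodesic d (fun t => if Rle_dec t (d x w) then g1 t else g2 (t - d x w)) x y.
Proof.
  intros Exy Hg1 Hg2. pose proof Hg1 as [A0 [A1 A]]. pose proof Hg2 as [B0 [B1 B]].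
  set (p := d x w) in *. set (q := d w y) in *.
  assert (Hp : 0 <= p) by apply dist_ge0. assert (Hq : 0 <= q) by apply dist_ge0.
  (* lower bound from the triangle inequality through both points, upper bound through w *)
  assert (cross : forall s t, 0 <= s <= p -> p < t <= p + q ->
                    d (g1 s) (g2 (t - p)) = t - s).
  { intros s t Hs Ht.
    destruct (geodesic_dist_ends g1 x w s Hg1 Hs) as [S1 S2].
    destruct (geodesic_dist_ends g2 w y (t - p) Hg2 ltac:(fold q; lra)) as [T1 T2].
    fold p q in S1, S2, T1, T2.
    pose proof (dist_triangle (g1 s) w (g2 (t - p))).
    pose proof (dist_triangle x (g1 s) y). pose proof (dist_triangle (g1 s) (g2 (t - p)) y).
    lra. }
  unfold geodesic. rewrite Exy. split; [|split].
  - destruct Rle_dec; [exact A0|lra].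
  - destruct Rle_dec.
    + assert (E : w = y) by (apply dist_eq0; fold q; lra).
      replace (p + q) with p by lra. rewrite A1; exact E.
    + replace (p + q - p) with q by ring. exact B1.
  - intros s t Hs Ht. destruct (Rle_dec s p), (Rle_dec t p).
    + apply A; lra.
    + rewrite cross by lra. rewrite Rabs_minus_sym, Rabs_right; lra.
    + rewrite dist_sym, cross by lra. rewrite Rabs_right; lra.
    + rewrite B by lra. f_equal; ring.
Qed.

Lemma geodesic_isometry {A : Type} (dA : A -> A -> R) (e : A -> T) g u v :
  (forall a b, d (e a) (e b) = dA a b) ->
  geodesic dA g u v -> geodesic d (fun t => e (g t)) (e u) (e v).
Proof.
  intros Iso [G0 [G1 G]]. unfold geodesic. rewrite Iso. split; [|split].
  - rewrite G0; reflexivity.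
  - rewrite G1; reflexivity.
  - intros s t Hs Ht. rewrite Iso. auto.
Qed.

Lemma geodesic_pullback {A : Type} (dA : A -> A -> R) (e : A -> T) (p : T -> A) g u v :
  (forall a b, d (e a) (e b) = dA a b) -> (forall a, p (e a) = a) ->
  geodesic d g (e u) (e v) -> (forall t, 0 <= t <= dA u v -> g t = e (p (g t))) ->
  geodesic dA (fun t => p (g t)) u v.
Proof.
  intros Iso pK [G0 [G1 G]] Hin. rewrite Iso in G1, G. split; [|split].
  - rewrite G0; apply pK.
  - rewrite G1; apply pK.
  - intros s t Hs Ht. rewrite <- Iso, <- (Hin s Hs), <- (Hin t Ht). auto.
Qed.

End MetricGeodesics.
Definition clamp (L t : R) : R := Rmax 0 (Rmin t L).

Lemma clamp_lipschitz L s t : Rabs (clamp L s - clamp L t) <= Rabs (s - t).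
Proof.
  unfold clamp, Rmax, Rmin; repeat destruct Rle_dec; unfold Rabs;
    repeat destruct Rcase_abs; lra.
Qed.

Lemma clamp_range L t : 0 <= L -> 0 <= clamp L t <= L.
Proof. intros; unfold clamp, Rmax, Rmin; repeat destruct Rle_dec; lra. Qed.

Lemma clamp_id L t : 0 <= t <= L -> clamp L t = t.
Proof. intros; unfold clamp, Rmax, Rmin; repeat destruct Rle_dec; lra. Qed.

Lemma lipschitz1_continuity (h : R -> R) :
  (forall s t, Rabs (h s - h t) <= Rabs (s - t)) -> continuity h.
Proof.
  intros Hh x eps Heps. exists eps. split; [lra|].
  intros y [_ Hy]. eapply Rle_lt_trans; [apply Hh|exact Hy].
Qed.

Section WeaklyUniformlyConvex.

Context {T : Type} (d : T -> T -> R) (eta : T -> R -> R -> R).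
Hypotheses (Hd : metric_space d) (Heta : modulus_wuc d eta).

Lemma wuc_modulus_bounds a r eps : 0 < r -> 0 < eps <= 2 -> 0 < eta a r eps <= 1.
Proof. apply Heta. Qed.

Lemma wuc_midpoint a r eps g x y :
  0 < r -> 0 < eps <= 2 -> geodesic d g x y ->
  d a x <= r -> d a y <= r -> eps * r <= d x y ->
  d a (g (d x y / 2)) <= (1 - eta a r eps) * r.
Proof. intros; apply Heta; assumption. Qed.

Lemma geodesic_dist_attains_max g x y a : geodesic d g x y ->
  exists t0, 0 <= t0 <= d x y /\ forall t, 0 <= t <= d x y -> d a (g t) <= d a (g t0).
Proof.
  intros Hg. set (L := d x y). assert (HL : 0 <= L) by apply (dist_ge0 d Hd).
  (* t |-> d a (g t) is 1-Lipschitz on [0, L]; clamping extends it to all of R *)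
  set (h := fun s => d a (g (clamp L s))).
  assert (Hlip : forall s t, Rabs (h s - h t) <= Rabs (s - t)).
  { intros s t. unfold h.
    pose proof (clamp_range L s HL) as Cs. pose proof (clamp_range L t HL) as Ct.
    destruct Hg as [_ [_ G]]. pose proof (G _ _ Cs Ct) as E.
    pose proof (dist_triangle d Hd a (g (clamp L s)) (g (clamp L t))).
    pose proof (dist_triangle d Hd a (g (clamp L t)) (g (clamp L s))).
    rewrite (dist_sym d Hd (g (clamp L t))) in H0.
    pose proof (clamp_lipschitz L s t). apply Rabs_le; lra. }
  destruct (continuity_ab_maj h 0 L HL (fun c _ => lipschitz1_continuity h Hlip c))
    as [t0 [Hmax Ht0]].
  exists t0. split; [exact Ht0|]. intros t Ht.
  specialize (Hmax t Ht). unfold h in Hmax. rewrite !clamp_id in Hmax; assumption.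
Qed.

Lemma wuc_ball_convex g x y a R0 :
  geodesic d g x y -> d a x <= R0 -> d a y <= R0 ->
  forall t, 0 <= t <= d x y -> d a (g t) <= R0.
Proof.
  intros Hg Hx Hy t Ht.
  destruct (geodesic_dist_attains_max g x y a Hg) as [t0 [Ht0 Hmax]].
  destruct (Rle_dec (d a (g t0)) R0) as [|Hgt]; [specialize (Hmax t Ht); lra|].
  exfalso. apply Rnot_le_lt in Hgt. set (M := d a (g t0)) in *.
  pose proof Hg as [G0 [G1 _]].
  assert (Hint : 0 < t0 < d x y).
  { split; apply Rnot_le_lt; intro E.
    - assert (E0 : t0 = 0) by lra. subst M. rewrite E0, G0 in Hgt. lra.
    - assert (EL : t0 = d x y) by lra. subst M. rewrite EL, G1 in Hgt. lra. }
  (* the maximum point t0 is the midpoint of a symmetric subsegment, which the modulus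
     pushes strictly inside the ball of radius M *)
  set (dl := Rmin t0 (d x y - t0)).
  assert (Hdl : 0 < dl /\ dl <= t0 /\ dl <= d x y - t0)
    by (unfold dl, Rmin; destruct Rle_dec; lra).
  destruct (geodesic_subsegment d g x y (t0 - dl) (t0 + dl) Hg) as [E Hsub]; try lra.
  assert (HM : 0 < M) by (pose proof (dist_ge0 d Hd a x); lra).
  set (e := 2 * dl / M).
  assert (He : e * M = 2 * dl) by (unfold e; field; lra).
  assert (Hdiam : 2 * dl <= 2 * M).
  { pose proof (dist_triangle d Hd (g (t0 - dl)) a (g (t0 + dl))) as Tri.
    rewrite (dist_sym d Hd _ a) in Tri.
    pose proof (Hmax (t0 - dl) ltac:(lra)). pose proof (Hmax (t0 + dl) ltac:(lra)). lra. }
  assert (He2 : 0 < e <= 2) by (split; nra).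
  pose proof (wuc_midpoint a M e _ _ _ HM He2 Hsub) as K.
  rewrite E in K.
  replace (t0 - dl + (t0 + dl - (t0 - dl)) / 2) with t0 in K by field.
  specialize (K (Hmax (t0 - dl) ltac:(lra)) (Hmax (t0 + dl) ltac:(lra)) ltac:(lra)).
  pose proof (wuc_modulus_bounds a M e HM He2). subst M. nra.
Qed.

End WeaklyUniformlyConvex.

Lemma radius_factor_mono D r e m : 0 <= r -> m <= e -> D <= (1 - e) * r -> D <= (1 - m) * r.
Proof. intros Hr Hm HD. assert (m * r <= e * r) by (apply Rmult_le_compat_r; lra). lra. Qed.

Section ShiftedMidpoint.

Context {T : Type} (d : T -> T -> R) (eta : T -> R -> R -> R).
Hypotheses (Hd : metric_space d) (Heta : modulus_wuc d eta).

(* [g] runs from [x] to [w] and is thought of as continued by a further segment of length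
   [q] beyond [w]; the midpoint of the whole path lies on [g] at parameter [(d x w + q) / 2]. *)
Lemma wuc_shifted_midpoint g x w a r eps q :
  0 < r -> 0 < eps <= 2 -> geodesic d g x w -> 0 <= q <= d x w ->
  d a x <= r -> d a w + q <= r -> eps * r <= d x w + q ->
  d a (g ((d x w + q) / 2)) <= (1 - Rmin (eps / 4) (eta a r (eps / 4))) * r.
Proof.
  intros Hr He Hg Hq Hx Hw Hlen. set (p := d x w) in *.
  assert (He4 : 0 < eps / 4 <= 2) by lra.
  pose proof (wuc_modulus_bounds d eta Heta a r (eps / 4) Hr He4) as Hbd.
  pose proof Hg as [_ [G1 _]]. fold p in G1.
  pose proof (dist_ge0 d Hd a w) as Haw.
  destruct (Rle_dec (eps * r / 4) q) as [Hqb|Hqb].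
  - (* the point lies between the midpoint of [g] and [w], both deep inside the ball *)
    set (R0 := (1 - Rmin (eps / 4) (eta a r (eps / 4))) * r).
    assert (B1 : d a (g (p / 2)) <= R0).
    { apply (radius_factor_mono _ _ (eta a r (eps / 4))); [lra|apply Rmin_r|].
      apply (wuc_midpoint d eta Heta); auto; fold p; nra. }
    assert (B2 : d a (g p) <= R0).
    { rewrite G1. apply (radius_factor_mono _ _ (eps / 4)); [lra|apply Rmin_l|lra]. }
    destruct (geodesic_subsegment d g x w (p / 2) p Hg) as [E Hsub]; try (fold p; lra).
    pose proof (wuc_ball_convex d eta Hd Heta _ _ _ a R0 Hsub B1 B2 (q / 2)) as K.
    rewrite E in K. replace ((p + q) / 2) with (p / 2 + q / 2) by field. apply K; lra.
  - (* [q] is small, so the subsegment from parameter [q] to [w] is still long *)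
    assert (Bq : d a (g q) <= r).
    { apply (wuc_ball_convex d eta Hd Heta g x w); auto; lra. }
    destruct (geodesic_subsegment d g x w q p Hg) as [E Hsub]; try (fold p; lra).
    apply (radius_factor_mono _ _ (eta a r (eps / 4))); [lra|apply Rmin_r|].
    pose proof (wuc_midpoint d eta Heta a r (eps / 4) _ _ _ Hr He4 Hsub Bq) as K.
    rewrite E, G1 in K. replace (q + (p - q) / 2) with ((p + q) / 2) in K by field.
    apply K; [pose proof (dist_ge0 d Hd a (g q)); lra|lra].
Qed.

End ShiftedMidpoint.

Lemma geodesic_prefix {T : Type} (d : T -> T -> R) g x y s :
  geodesic d g x y -> 0 <= s <= d x y -> geodesic d g x (g s).
Proof.
  intros Hg Hs. destruct (geodesic_dist_ends d g x y s Hg Hs) as [Es _].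
  destruct Hg as [G0 [_ G]]. unfold geodesic. rewrite Es.
  split; [exact G0|split; [reflexivity|]]. intros u t Hu Ht; apply G; lra.
Qed.

Section Gluing.

Context {X Y : Type} (dX : X -> X -> R) (dY : Y -> Y -> R) (theta : X) (tau : Y).

Local Notation Z := (glue X Y tau).
Local Notation dZ := (glue_dist dX dY theta tau).

Lemma inl_neq_tau (x : X) : (inl x : X + Y) <> inr tau.
Proof. discriminate. Qed.

Lemma inr_neq_tau (y : Y) : y <> tau -> (inr y : X + Y) <> inr tau.
Proof. intros H E; injection E; exact H. Qed.

Definition embX (x : X) : Z := exist _ (inl x) (inl_neq_tau x).

Definition embY (y : Y) : Z :=
  match excluded_middle_informative (y = tau) with
  | left _ => embX theta
  | right H => exist _ (inr y) (inr_neq_tau y H)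
  end.

Definition projX (z : Z) : X := match proj1_sig z with inl x => x | inr _ => theta end.
Definition projY (z : Z) : Y := match proj1_sig z with inl _ => tau | inr y => y end.

Lemma embY_tau : embY tau = embX theta.
Proof. unfold embY; destruct excluded_middle_informative; congruence. Qed.

Lemma projY_embY y : projY (embY y) = y.
Proof. unfold embY; destruct excluded_middle_informative; subst; reflexivity. Qed.

Lemma glue_cases (z : Z) : (exists x, z = embX x) \/ (exists y, y <> tau /\ z = embY y).
Proof.
  destruct z as [[x|y] Hz].
  - left; exists x. unfold embX. f_equal; apply proof_irrelevance.
  - right; exists y. assert (Hy : y <> tau) by (intro E; subst; apply Hz; reflexivity).
    split; [exact Hy|]. unfold embY; destruct excluded_middle_informative; [contradiction|].
    f_equal; apply proof_irrelevance.
Qed.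

Hypotheses (HX : metric_space dX) (HY : metric_space dY).

Lemma glue_dist_XX x x' : dZ (embX x) (embX x') = dX x x'.
Proof. reflexivity. Qed.

Lemma glue_dist_XY x y : dZ (embX x) (embY y) = dX x theta + dY tau y.
Proof.
  unfold embY; destruct excluded_middle_informative as [->|]; [|reflexivity].
  rewrite glue_dist_XX, (dist_refl dY HY). ring.
Qed.

Lemma glue_dist_YX x y : dZ (embY y) (embX x) = dX x theta + dY tau y.
Proof.
  unfold embY; destruct excluded_middle_informative as [->|]; [|reflexivity].
  rewrite glue_dist_XX, (dist_refl dY HY), (dist_sym dX HX). ring.
Qed.

Lemma glue_dist_YY y y' : dZ (embY y) (embY y') = dY y y'.
Proof.
  unfold embY; destruct (excluded_middle_informative (y = tau)) as [->|],
    (excluded_middle_informative (y' = tau)) as [->|]; unfold glue_dist; simpl.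
  - rewrite (dist_refl dX HX), (dist_refl dY HY); reflexivity.
  - rewrite (dist_refl dX HX). ring.
  - rewrite (dist_refl dX HX), (dist_sym dY HY). ring.
  - reflexivity.
Qed.

Ltac glue_point z :=
  let x := fresh "x" in let y := fresh "y" in let Hy := fresh "Hy" in
  destruct (glue_cases z) as [[x ->]|[y [Hy ->]]].

Ltac glue_dist_simpl :=
  repeat first [ rewrite glue_dist_XX | rewrite glue_dist_XY | rewrite glue_dist_YX
               | rewrite glue_dist_YY ].

Lemma glue_metric : metric_space dZ.
Proof.
  pose proof (dist_ge0 dX HX) as PX. pose proof (dist_ge0 dY HY) as PY.
  pose proof (dist_sym dX HX) as SX. pose proof (dist_sym dY HY) as SY.
  pose proof (dist_triangle dX HX) as TX. pose proof (dist_triangle dY HY) as TY.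
  split; [|split; [|split]].
  - intros z w; glue_point z; glue_point w; glue_dist_simpl; auto;
      pose proof (PX x theta); pose proof (PY tau y); try pose proof (PX x0 theta);
      try pose proof (PY tau y0); lra.
  - intros z w; split.
    + glue_point z; glue_point w; glue_dist_simpl; intro E.
      * f_equal; apply (dist_eq0 dX HX); auto.
      * exfalso. pose proof (PX x theta); pose proof (dist_gt0 dY HY tau y (not_eq_sym Hy)); lra.
      * exfalso. pose proof (PX x theta); pose proof (dist_gt0 dY HY tau y (not_eq_sym Hy)); lra.
      * f_equal; apply (dist_eq0 dY HY); auto.
    + intros <-. glue_point z; glue_dist_simpl; [apply (dist_refl dX HX)|apply (dist_refl dY HY)].
  - intros z w; glue_point z; glue_point w; glue_dist_simpl; auto.
  - intros z w u; glue_point z; glue_point w; glue_point u; glue_dist_simpl.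
    + apply TX.
    + pose proof (TX x x0 theta); lra.
    + pose proof (TX x theta x0); pose proof (SX theta x0); pose proof (PY tau y); lra.
    + pose proof (TY tau y y0); lra.
    + pose proof (TX x0 x theta); pose proof (SX x0 x); lra.
    + pose proof (TY y tau y0); pose proof (SY y tau); pose proof (PX x theta); lra.
    + pose proof (TY tau y0 y); pose proof (SY y0 y); lra.
    + apply TY.
Qed.


Lemma glue_geodesic_space : geodesic_space dX -> geodesic_space dY -> geodesic_space dZ.
Proof.
  intros [_ GX] [_ GY]. split; [exact glue_metric|].
  assert (HXY : forall x y, exists g, geodesic dZ g (embX x) (embY y)).
  { intros x y. destruct (GX x theta) as [gx Hgx], (GY tau y) as [gy Hgy].
    eexists. apply (geodesic_concat dZ glue_metric
      (fun t => embX (gx t)) (fun t => embY (gy t)) _ (embX theta)).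
    - rewrite glue_dist_XY, glue_dist_XX, <- embY_tau, glue_dist_YY. reflexivity.
    - apply (geodesic_isometry dZ dX embX); [exact glue_dist_XX|exact Hgx].
    - rewrite <- embY_tau. apply (geodesic_isometry dZ dY embY); [exact glue_dist_YY|exact Hgy]. }
  intros z w; glue_point z; glue_point w.
  - destruct (GX x x0) as [g Hg]. eexists.
    apply (geodesic_isometry dZ dX embX); [exact glue_dist_XX|exact Hg].
  - apply HXY.
  - destruct (HXY x y) as [g Hg]. eexists; apply (geodesic_rev dZ glue_metric _ _ _ Hg).
  - destruct (GY y y0) as [g Hg]. eexists.
    apply (geodesic_isometry dZ dY embY); [exact glue_dist_YY|exact Hg].
Qed.

Lemma glue_between_X x1 x2 z :
  dZ (embX x1) z + dZ z (embX x2) = dX x1 x2 -> z = embX (projX z).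
Proof.
  glue_point z; glue_dist_simpl; intro E; [reflexivity|exfalso].
  pose proof (dist_gt0 dY HY tau y (not_eq_sym Hy)).
  pose proof (dist_triangle dX HX x1 theta x2). pose proof (dist_sym dX HX theta x2). lra.
Qed.

Lemma glue_between_Y y1 y2 z :
  dZ (embY y1) z + dZ z (embY y2) = dY y1 y2 -> z = embY (projY z).
Proof.
  glue_point z; glue_dist_simpl; intro E; [|rewrite projY_embY; reflexivity].
  destruct (classic (x = theta)) as [->|Hx]; [symmetry; exact embY_tau|exfalso].
  pose proof (dist_gt0 dX HX x theta Hx).
  pose proof (dist_triangle dY HY y1 tau y2). pose proof (dist_sym dY HY y1 tau). lra.
Qed.

Lemma glue_near_X x z : dZ (embX x) z <= dX x theta -> z = embX (projX z).
Proof.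
  glue_point z; glue_dist_simpl; intro E; [reflexivity|exfalso].
  pose proof (dist_gt0 dY HY tau y (not_eq_sym Hy)). lra.
Qed.

Lemma glue_near_Y y z : dZ z (embY y) <= dY tau y -> z = embY (projY z).
Proof.
  glue_point z; glue_dist_simpl; intro E; [|rewrite projY_embY; reflexivity].
  assert (x = theta) as -> by (apply (dist_eq0 dX HX); pose proof (dist_ge0 dX HX x theta); lra).
  symmetry; exact embY_tau.
Qed.

Lemma glue_geodesic_in_X g x1 x2 : geodesic dZ g (embX x1) (embX x2) ->
  geodesic dX (fun t => projX (g t)) x1 x2 /\
  forall t, 0 <= t <= dX x1 x2 -> g t = embX (projX (g t)).
Proof.
  intros Hg.
  assert (Hin : forall t, 0 <= t <= dX x1 x2 -> g t = embX (projX (g t))).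
  { intros t Ht. apply (glue_between_X x1 x2).
    destruct (geodesic_dist_ends dZ g _ _ t Hg Ht) as [E1 E2].
    rewrite E1, E2, glue_dist_XX. ring. }
  split; [|exact Hin].
  apply (geodesic_pullback dZ dX embX projX); auto.
Qed.

Lemma glue_geodesic_in_Y g y1 y2 : geodesic dZ g (embY y1) (embY y2) ->
  geodesic dY (fun t => projY (g t)) y1 y2 /\
  forall t, 0 <= t <= dY y1 y2 -> g t = embY (projY (g t)).
Proof.
  intros Hg.
  assert (Hin : forall t, 0 <= t <= dY y1 y2 -> g t = embY (projY (g t))).
  { intros t Ht. apply (glue_between_Y y1 y2). rewrite <- glue_dist_YY in Ht.
    destruct (geodesic_dist_ends dZ g _ _ t Hg Ht) as [E1 E2]. rewrite E1, E2, glue_dist_YY.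
    ring. }
  split; [|exact Hin].
  apply (geodesic_pullback dZ dY embY projY); auto; [exact glue_dist_YY|exact projY_embY].
Qed.

Lemma glue_geodesic_XY_in_X g x y : geodesic dZ g (embX x) (embY y) ->
  geodesic dX (fun t => projX (g t)) x theta /\
  forall t, 0 <= t <= dX x theta -> g t = embX (projX (g t)).
Proof.
  intros Hg. pose proof (dist_ge0 dX HX x theta). pose proof (dist_ge0 dY HY tau y).
  assert (Hin : forall t, 0 <= t <= dX x theta -> g t = embX (projX (g t))).
  { intros t Ht. apply (glue_near_X x).
    destruct (geodesic_dist_ends dZ g _ _ t Hg) as [E1 _]; rewrite ?glue_dist_XY; lra. }
  split; [|exact Hin].
  set (p := dX x theta) in *.
  assert (Hp : 0 <= p <= dZ (embX x) (embY y)) by (rewrite glue_dist_XY; fold p; lra).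
  assert (Gp : g p = embX theta).
  { destruct (geodesic_dist_ends dZ g _ _ p Hg Hp) as [_ E2].
    rewrite (Hin p ltac:(lra)), !glue_dist_XY in E2.
    assert (projX (g p) = theta) as <- by
      (apply (dist_eq0 dX HX); fold p in E2; lra).
    apply Hin; lra. }
  apply (geodesic_pullback dZ dX embX projX); auto.
  rewrite <- Gp. apply (geodesic_prefix dZ g _ _ p Hg Hp).
Qed.

Context (etaX : X -> R -> R -> R) (etaY : Y -> R -> R -> R).
Hypotheses (MX : modulus_wuc dX etaX) (MY : modulus_wuc dY etaY)
  (MonY : monotone_modulus etaY).

Lemma glue_midpoint_XX xa r eps g x1 x2 :
  0 < r -> 0 < eps <= 2 -> geodesic dZ g (embX x1) (embX x2) ->
  dX xa x1 <= r -> dX xa x2 <= r -> eps * r <= dX x1 x2 ->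
  dZ (embX xa) (g (dX x1 x2 / 2)) <= (1 - etaX xa r eps) * r.
Proof.
  intros Hr He Hg H1 H2 Hlen. destruct (glue_geodesic_in_X g x1 x2 Hg) as [HgX Hin].
  pose proof (dist_ge0 dX HX x1 x2).
  rewrite Hin, glue_dist_XX by lra.
  exact (wuc_midpoint dX etaX MX xa r eps _ _ _ Hr He HgX H1 H2 Hlen).
Qed.

Lemma glue_midpoint_YY xa r eps g y1 y2 :
  0 < r -> 0 < eps <= 2 -> geodesic dZ g (embY y1) (embY y2) ->
  dX xa theta + dY tau y1 <= r -> dX xa theta + dY tau y2 <= r -> eps * r <= dY y1 y2 ->
  dZ (embX xa) (g (dY y1 y2 / 2)) <= (1 - etaY tau r eps * eps / 2) * r.
Proof.
  intros Hr He Hg H1 H2 Hlen. destruct (glue_geodesic_in_Y g y1 y2 Hg) as [HgY Hin].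
  pose proof (dist_ge0 dY HY y1 y2).
  rewrite Hin, glue_dist_XY by lra.
  set (rho := r - dX xa theta).
  pose proof (dist_ge0 dX HX xa theta).
  pose proof (dist_triangle dY HY y1 tau y2). pose proof (dist_sym dY HY y1 tau).
  assert (Hrho : eps * r / 2 <= rho) by (unfold rho; lra).
  assert (Hrho0 : 0 < rho) by nra.
  assert (Hlen' : eps * rho <= dY y1 y2) by (unfold rho in *; nra).
  pose proof (wuc_midpoint dY etaY MY tau rho eps _ _ _ Hrho0 He HgY
                ltac:(unfold rho; lra) ltac:(unfold rho; lra) Hlen') as K.
  pose proof (MonY tau rho r eps Hrho0 ltac:(unfold rho; lra) He) as Mono.
  pose proof (wuc_modulus_bounds dY etaY MY tau r eps Hr He).
  set (e := etaY tau r eps) in *.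
  assert (e * rho <= etaY tau rho eps * rho) by (apply Rmult_le_compat_r; lra).
  assert (e * (eps * r / 2) <= e * rho) by (apply Rmult_le_compat_l; lra).
  unfold rho in *. nra.
Qed.

Lemma glue_midpoint_XY xa r eps g x1 y2 :
  0 < r -> 0 < eps <= 2 -> geodesic dZ g (embX x1) (embY y2) ->
  dX xa x1 <= r -> dX xa theta + dY tau y2 <= r -> eps * r <= dX x1 theta + dY tau y2 ->
  dZ (embX xa) (g ((dX x1 theta + dY tau y2) / 2)) <=
  (1 - Rmin (eps / 4) (etaX xa r (eps / 4))) * r.
Proof.
  intros Hr He Hg H1 H2 Hlen.
  pose proof (dist_ge0 dX HX x1 theta). pose proof (dist_ge0 dY HY tau y2).
  set (p := dX x1 theta) in *. set (q := dY tau y2) in *.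
  destruct (Rle_dec p q) as [Hpq|Hpq].
  - destruct (geodesic_dist_ends dZ g _ _ ((p + q) / 2) Hg) as [E1 E2];
      [rewrite glue_dist_XY; fold p q; lra|].
    rewrite glue_dist_XY in E2; fold p q in E2.
    rewrite (glue_near_Y y2 (g ((p + q) / 2))) in E1 |- * by (fold q; lra).
    rewrite glue_dist_XY in E1 |- *. fold p in E1.
    apply (radius_factor_mono _ _ (eps / 4)); [lra|apply Rmin_l|nra].
  - destruct (glue_geodesic_XY_in_X g x1 y2 Hg) as [HgX Hin].
    rewrite Hin, glue_dist_XX by (fold p; lra).
    apply (wuc_shifted_midpoint dX etaX HX MX (fun t => projX (g t)) x1 theta xa r eps q);
      auto; fold p; lra.
Qed.

Lemma glue_wuc_X xa r eps z w g :
  0 < r -> 0 < eps <= 2 -> geodesic dZ g z w ->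
  dZ (embX xa) z <= r -> dZ (embX xa) w <= r -> eps * r <= dZ z w ->
  dZ (embX xa) (g (dZ z w / 2)) <= (1 - glue_eta etaX etaY theta tau (embX xa) r eps) * r.
Proof.
  intros Hr He Hg. unfold glue_eta; simpl.
  set (m1 := etaX xa r eps). set (m2 := etaY tau r eps * eps / 2).
  set (m34 := Rmin (eps / 4) (etaX xa r (eps / 4))).
  assert (Hr0 : 0 <= r) by lra.
  destruct (glue_cases z) as [[x1 ->]|[y1 [_ ->]]], (glue_cases w) as [[x2 ->]|[y2 [_ ->]]];
    glue_dist_simpl; intros H1 H2 Hlen.
  - apply (radius_factor_mono _ _ m1 _ Hr0 (Rle_trans _ _ _ (Rmin_l _ _) (Rmin_l _ _))).
    apply (glue_midpoint_XX xa r eps g); auto.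
  - apply (radius_factor_mono _ _ m34 _ Hr0 (Rmin_r _ _)).
    apply (glue_midpoint_XY xa r eps g); auto.
  - apply (radius_factor_mono _ _ m34 _ Hr0 (Rmin_r _ _)).
    pose proof (geodesic_rev dZ glue_metric _ _ _ Hg) as Hg'. rewrite glue_dist_YX in Hg'.
    pose proof (glue_midpoint_XY xa r eps _ x2 y1 Hr He Hg' H2 H1 Hlen) as K.
    cbv beta in K.
    replace (dX x2 theta + dY tau y1 - (dX x2 theta + dY tau y1) / 2)
      with ((dX x2 theta + dY tau y1) / 2) in K by field.
    exact K.
  - apply (radius_factor_mono _ _ m2 _ Hr0 (Rle_trans _ _ _ (Rmin_l _ _) (Rmin_r _ _))).
    apply (glue_midpoint_YY xa r eps g); auto.
Qed.

End Gluing.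

Section Symmetry.

Context {X Y : Type} (dX : X -> X -> R) (dY : Y -> Y -> R) (theta : X) (tau : Y).
Hypotheses (HX : metric_space dX) (HY : metric_space dY).

Local Notation dZ := (glue_dist dX dY theta tau).
Local Notation dZ' := (glue_dist dY dX tau theta).

Definition glue_swap (z : glue X Y tau) : glue Y X theta :=
  match proj1_sig z with inl x => embY tau theta x | inr y => embX theta y end.

Lemma glue_swap_embX x : glue_swap (embX tau x) = embY tau theta x.
Proof. reflexivity. Qed.

Lemma glue_swap_embY y : glue_swap (embY theta tau y) = embX theta y.
Proof.
  unfold embY at 1; destruct excluded_middle_informative as [->|]; [|reflexivity].
  rewrite glue_swap_embX. apply embY_tau.
Qed.

Lemma glue_swap_dist z w : dZ' (glue_swap z) (glue_swap w) = dZ z w.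
Proof.
  destruct (glue_cases theta tau z) as [[x ->]|[y [_ ->]]],
    (glue_cases theta tau w) as [[x' ->]|[y' [_ ->]]];
    rewrite ?glue_swap_embX, ?glue_swap_embY.
  - rewrite (glue_dist_YY _ _ _ _ HY HX). reflexivity.
  - rewrite (glue_dist_YX _ _ _ _ HY HX), (glue_dist_XY _ _ _ _ HY),
      (dist_sym dY HY), (dist_sym dX HX). ring.
  - rewrite (glue_dist_XY _ _ _ _ HX), (glue_dist_YX _ _ _ _ HX HY),
      (dist_sym dY HY), (dist_sym dX HX). ring.
  - rewrite glue_dist_XX, (glue_dist_YY _ _ _ _ HX HY). reflexivity.
Qed.

Context (etaX : X -> R -> R -> R) (etaY : Y -> R -> R -> R).

Lemma glue_eta_swap ya r eps : ya <> tau ->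
  glue_eta etaX etaY theta tau (embY theta tau ya) r eps =
  glue_eta etaY etaX tau theta (embX theta ya) r eps.
Proof.
  intros Hya. unfold embY; destruct excluded_middle_informative; [contradiction|reflexivity].
Qed.

Hypotheses (MX : modulus_wuc dX etaX) (MY : modulus_wuc dY etaY)
  (MonX : monotone_modulus etaX).

Lemma glue_wuc_Y ya r eps z w g : ya <> tau ->
  0 < r -> 0 < eps <= 2 -> geodesic dZ g z w ->
  dZ (embY theta tau ya) z <= r -> dZ (embY theta tau ya) w <= r -> eps * r <= dZ z w ->
  dZ (embY theta tau ya) (g (dZ z w / 2)) <=
  (1 - glue_eta etaX etaY theta tau (embY theta tau ya) r eps) * r.
Proof.
  intros Hya Hr He Hg. rewrite glue_eta_swap by exact Hya.
  rewrite <- !glue_swap_dist, !glue_swap_embY. intros Hz Hw Hlen.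
  apply (glue_wuc_X dY dX tau theta HY HX etaY etaX MY MX MonX ya r eps _ _
           (fun t => glue_swap (g t))); auto.
  apply (geodesic_isometry dZ' dZ glue_swap); [exact glue_swap_dist|exact Hg].
Qed.

End Symmetry.

Lemma min4_in_unit a b c e : 0 < a <= 1 -> 0 < b -> 0 < c -> 0 < e ->
  0 < Rmin (Rmin a b) (Rmin c e) <= 1.
Proof.
  intros. split.
  - repeat apply Rmin_glb_lt; lra.
  - eapply Rle_trans; [apply Rmin_l|]. eapply Rle_trans; [apply Rmin_l|]. lra.
Qed.

Lemma glue_eta_bounds {X Y : Type} (dX : X -> X -> R) (dY : Y -> Y -> R)
  (etaX : X -> R -> R -> R) (etaY : Y -> R -> R -> R) (theta : X) (tau : Y) a r eps :
  modulus_wuc dX etaX -> modulus_wuc dY etaY -> 0 < r -> 0 < eps <= 2 ->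
  0 < glue_eta etaX etaY theta tau a r eps <= 1.
Proof.
  intros MX MY Hr He. assert (He4 : 0 < eps / 4 <= 2) by lra.
  unfold glue_eta. destruct (proj1_sig a) as [x|y]; apply min4_in_unit; try lra.
  - exact (wuc_modulus_bounds dX etaX MX x r eps Hr He).
  - pose proof (wuc_modulus_bounds dY etaY MY tau r eps Hr He). nra.
  - exact (proj1 (wuc_modulus_bounds dX etaX MX x r (eps / 4) Hr He4)).
  - exact (wuc_modulus_bounds dY etaY MY y r eps Hr He).
  - pose proof (wuc_modulus_bounds dX etaX MX theta r eps Hr He). nra.
  - exact (proj1 (wuc_modulus_bounds dY etaY MY y r (eps / 4) Hr He4)).
Qed.

Theorem lemma2p2 (X Y : Type) (dX : X -> X -> R) (dY : Y -> Y -> R)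
  (etaX : X -> R -> R -> R) (etaY : Y -> R -> R -> R) (theta : X) (tau : Y) :
  geodesic_space dX -> geodesic_space dY ->
  modulus_wuc dX etaX -> monotone_modulus etaX ->
  modulus_wuc dY etaY -> monotone_modulus etaY ->
  geodesic_space (glue_dist dX dY theta tau) /\
  modulus_wuc (glue_dist dX dY theta tau) (glue_eta etaX etaY theta tau).
Proof.
  intros GX GY MX MonX MY MonY.
  pose proof (proj1 GX) as HX. pose proof (proj1 GY) as HY.
  split; [exact (glue_geodesic_space dX dY theta tau HX HY GX GY)|split].
  - intros a r eps. exact (glue_eta_bounds dX dY etaX etaY theta tau a r eps MX MY).
  - intros a r eps z w g Hr He Hg.
    destruct (glue_cases theta tau a) as [[xa ->]|[ya [Hya ->]]].
    + exact (glue_wuc_X dX dY theta tau HX HY etaX etaY MX MY MonY xa r eps z w g Hr He Hg).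
    + exact (glue_wuc_Y dX dY theta tau HX HY etaX etaY MX MY MonX ya r eps z w g Hya Hr He Hg).
Qed.
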